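(* Let $\mathcal{X}=\{\boldsymbol{x}_1,\dots,\boldsymbol{x}_N\}\subseteq\mathbb{R}^D$ with $\|\boldsymbol{x}_j\|_2=1$ for all $j$, and let $\lambda\in(1,\infty)$. For each $j\in\{1,\dots,N\}$: (i) for every $\mathcal{X}_0\subseteq\mathcal{X}$, $f_\lambda(\boldsymbol{x}_j,\mathcal{X}_0)\in[1-\frac{1}{2\lambda},\frac{\lambda}{2}]$; (ii) $f_\lambda(\boldsymbol{x}_j,\emptyset)=\lambda/2$; (iii) for $\mathcal{X}_0\subseteq\mathcal{X}$, $f_\lambda(\boldsymbol{x}_j,\mathcal{X}_0)=1-\frac{1}{2\lambda}$ if and only if at least one of $\boldsymbol{x}_j$ or $-\boldsymbol{x}_j$ belongs to $\mathcal{X}_0$.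
   Context: For $\mathcal{X}_0\subseteq\mathcal{X}$ nonempty and $\boldsymbol{x}_j\in\mathcal{X}$, define $f_\lambda(\boldsymbol{x}_j,\mathcal{X}_0):=\min_{\boldsymbol{c}\in\mathbb{R}^N}\|\boldsymbol{c}\|_1+\frac{\lambda}{2}\|\boldsymbol{x}_j-\sum_{i:\boldsymbol{x}_i\in\mathcal{X}_0}c_i\boldsymbol{x}_i\|_2^2$, and by convention $f_\lambda(\boldsymbol{x}_j,\emptyset):=\lambda/2$. *)

From mathcomp Require Import all_boot all_order all_algebra.
From mathcomp Require Import all_classical all_reals.
Set Implicit Arguments. Unset Strict Implicit. Unset Printing Implicit Defensive.
Import Order.TTheory GRing.Theory Num.Theory.
Local Open Scope classical_set_scope.
Local Open Scope ring_scope.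

Definition sqnorm2 (R : realType) (D : nat) (v : 'rV[R]_D) : R :=
  \sum_(k < D) (v 0 k) ^+ 2.

Definition norm1 (R : realType) (N : nat) (c : 'I_N -> R) : R :=
  \sum_(i < N) `|c i|.

Definition fobj (R : realType) (D N : nat) (lam : R) (x : 'I_N -> 'rV[R]_D)
  (xj : 'rV[R]_D) (X0 : set 'rV[R]_D) (c : 'I_N -> R) : R :=
  norm1 c + lam / 2 * sqnorm2 (xj - \sum_(i < N | x i \in X0) c i *: x i).

(* f_lam(xj, X0) := min_c fobj (the minimum is attained; we take the infimum
   of the set of objective values), with convention f_lam(xj, emptyset) = lam/2 *)
Definition f_lam (R : realType) (D N : nat) (lam : R) (x : 'I_N -> 'rV[R]_D)
  (xj : 'rV[R]_D) (X0 : set 'rV[R]_D) : R :=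
  if `[< X0 = set0 >] then lam / 2
  else inf [set fobj lam x xj X0 c | c in [set: 'I_N -> R]].

From mathcomp Require Import all_boot all_order all_algebra.
From mathcomp Require Import all_classical all_reals.
From mathcomp Require Import ring lra.
Import Order.TTheory GRing.Theory Num.Theory.
Local Open Scope classical_set_scope.
Local Open Scope ring_scope.
Set Implicit Arguments. Unset Strict Implicit. Unset Printing Implicit Defensive.

(* Write w := sum_i c_i x_i and s := <u, w> for the unit vector u = x_j.  Then
   ||u - w||^2 >= (1 - s)^2, and |s| <= rho ||c||_1 with
   rho := max_{x_i in X0} |<u, x_i>| <= 1.  Completing the square,
     s + lam/2 (1 - s)^2 = 1 - 1/(2 lam) + lam/2 (s - (1 - 1/lam))^2,
   so every objective value is at least 1 - 1/(2 lam), with equality for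
   c = +-(1 - 1/lam) e_k when x_k = +-u.  If neither u nor -u lies in X0 then
   rho < 1, and the slack (1 - rho)|s| + lam/2 (s - (1 - 1/lam))^2 is bounded
   below by the positive constant [margin lam rho], independent of c; hence the
   infimum stays strictly above 1 - 1/(2 lam). *)

Section Scalar.
Variable R : realFieldType.

Lemma completed_square (lam s : R) : lam != 0 ->
  s + lam / 2 * (1 - s) ^+ 2 = 1 - 1 / (2 * lam) + lam / 2 * (s - (1 - lam^-1)) ^+ 2.
Proof. by move=> l0; field. Qed.

Lemma slack_ge_min (k lam a s : R) : 0 <= k -> 0 < lam -> 0 <= a ->
  Num.min (k * a / 2) (lam * a ^+ 2 / 8) <= k * `|s| + lam / 2 * (s - a) ^+ 2.
Proof.
move=> k0 l0 a0; rewrite ge_min.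
have sq0 : 0 <= lam / 2 * (s - a) ^+ 2 by rewrite mulr_ge0 ?sqr_ge0 ?divr_ge0 ?ltW.
have abs0 : 0 <= k * `|s| by rewrite mulr_ge0.
case: (leP (a / 2) s) => hs; apply/orP; [left | right].
- have : k * a / 2 <= k * `|s|.
    by rewrite -mulrA ler_wpM2l // (le_trans hs) ?real_ler_norm ?num_real.
  lra.
- have : (a / 2) ^+ 2 <= (s - a) ^+ 2.
    by rewrite -[(s - a) ^+ 2]sqrrN ler_sqr ?nnegrE; lra.
  nra.
Qed.

Definition margin (lam rho : R) : R :=
  Num.min ((1 - rho) * (1 - lam^-1) / 2) (lam * (1 - lam^-1) ^+ 2 / 8).

Lemma margin1 lam : 1 < lam -> margin lam 1 = 0.
Proof.
move=> hl; rewrite /margin subrr !mul0r; apply/min_idPl.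
have l0 : 0 < lam by lra.
by rewrite divr_ge0 // mulr_ge0 ?sqr_ge0 // ltW.
Qed.

Lemma margin_gt0 lam rho : 1 < lam -> rho < 1 -> 0 < margin lam rho.
Proof.
move=> hl hr; have l0 : 0 < lam by lra.
have a0 : 0 < 1 - lam^-1 by rewrite subr_gt0 invf_lt1.
rewrite lt_min; apply/andP; split; apply: divr_gt0 => //; apply: mulr_gt0 => //.
- by rewrite subr_gt0.
- exact: exprn_gt0.
Qed.

Lemma margin_lower_bound (lam rho t s q : R) : 1 < lam -> 0 <= rho <= 1 -> 0 <= t ->
  `|s| <= rho * t -> (1 - s) ^+ 2 <= q ->
  1 - 1 / (2 * lam) + margin lam rho <= t + lam / 2 * q.
Proof.
move=> hl /andP[r0]; rewrite -subr_ge0 => r1 t0 hs hq; have l0 : 0 < lam by lra.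
have a0 : 0 <= 1 - lam^-1 by rewrite subr_ge0 ltW // invf_lt1.
have sq := completed_square s (lt0r_neq0 l0).
have slack := slack_ge_min s r1 l0 a0.
have st : (1 - rho) * `|s| <= t - s.
  have ts : `|s| <= t by have := mulr_ge0 r1 t0; lra.
  have : s <= `|s| by rewrite real_ler_norm ?num_real.
  have : 0 <= (1 - rho) * (t - `|s|) by rewrite mulr_ge0 // subr_ge0.
  lra.
have : lam / 2 * (1 - s) ^+ 2 <= lam / 2 * q.
  by apply: ler_wpM2l => //; rewrite divr_ge0 ?ltW.
rewrite /margin; lra.
Qed.
End Scalar.

Section InnerProduct.
Variables (R : realType) (D : nat).
Implicit Types u v w : 'rV[R]_D.

Definition dot u v : R := \sum_(k < D) u 0 k * v 0 k.

Lemma dotC u v : dot u v = dot v u.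
Proof. by apply: eq_bigr => k _; rewrite mulrC. Qed.

Lemma dotBr u v w : dot u (v - w) = dot u v - dot u w.
Proof. by rewrite /dot -sumrB; apply: eq_bigr => k _; rewrite !mxE mulrBr. Qed.

Lemma dotZr (a : R) u v : dot u (a *: v) = a * dot u v.
Proof. by rewrite /dot mulr_sumr; apply: eq_bigr => k _; rewrite !mxE mulrCA. Qed.

Lemma dot_sumr (I : finType) (P : pred I) (c : I -> R) (v : I -> 'rV[R]_D) u :
  dot u (\sum_(i | P i) c i *: v i) = \sum_(i | P i) c i * dot u (v i).
Proof.
rewrite /dot; under eq_bigr => k _ do rewrite summxE big_distrr /=.
rewrite exchange_big /=; apply: eq_bigr => i _.
by rewrite mulr_sumr; apply: eq_bigr => k _; rewrite !mxE mulrCA.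
Qed.

Lemma sqnorm2_dot u : sqnorm2 u = dot u u.
Proof. by apply: eq_bigr => k _; rewrite expr2. Qed.

Lemma sqnorm2D u v : sqnorm2 (u + v) = sqnorm2 u + 2 * dot u v + sqnorm2 v.
Proof.
rewrite /sqnorm2 /dot mulr_sumr -!big_split /=; apply: eq_bigr => k _.
by rewrite !mxE; ring.
Qed.

Lemma sqnorm2B u v : sqnorm2 (u - v) = sqnorm2 u - 2 * dot u v + sqnorm2 v.
Proof.
rewrite /sqnorm2 /dot mulr_sumr -sumrB -big_split /=; apply: eq_bigr => k _.
by rewrite !mxE; ring.
Qed.

Lemma sqnorm2Z (a : R) u : sqnorm2 (a *: u) = a ^+ 2 * sqnorm2 u.
Proof. by rewrite /sqnorm2 mulr_sumr; apply: eq_bigr => k _; rewrite !mxE exprMn. Qed.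

Lemma sqnorm2_ge0 u : 0 <= sqnorm2 u.
Proof. by apply: sumr_ge0 => k _; rewrite sqr_ge0. Qed.

Lemma sqnorm2_eq0 u : sqnorm2 u = 0 -> u = 0.
Proof.
move=> u0; apply/matrixP => i k; rewrite (ord1 i) mxE.
have /eqP := psumr_eq0P (fun k _ => sqr_ge0 (u 0 k)) u0 (i := k) isT.
by rewrite sqrf_eq0 => /eqP.
Qed.

Lemma sqr_dot_le u v : sqnorm2 u = 1 -> dot u v ^+ 2 <= sqnorm2 v.
Proof.
move=> u1; have := sqnorm2_ge0 (v - dot u v *: u).
by rewrite sqnorm2B sqnorm2Z u1 dotZr (dotC v u); nra.
Qed.

Lemma norm_dot_le1 u v : sqnorm2 u = 1 -> sqnorm2 v = 1 -> `|dot u v| <= 1.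
Proof.
move=> u1 v1; have := sqr_dot_le v u1; rewrite v1 => h.
by rewrite ler_norml; apply/andP; split; nra.
Qed.

Lemma unit_norm_dot_eq1 u v : sqnorm2 u = 1 -> sqnorm2 v = 1 ->
  `|dot u v| = 1 -> v = u \/ v = - u.
Proof.
move=> u1 v1 /eqP; rewrite eqr_norml ler01 andbT => /orP[] /eqP d.
- left; have /sqnorm2_eq0/eqP : sqnorm2 (u - v) = 0 by rewrite sqnorm2B u1 v1 d; ring.
  by rewrite subr_eq0 => /eqP.
- right; have /sqnorm2_eq0/eqP : sqnorm2 (u + v) = 0 by rewrite sqnorm2D u1 v1 d; ring.
  by rewrite addrC addr_eq0 => /eqP.
Qed.
End InnerProduct.

Section L1Norm.
Variables (R : realType) (N : nat).

Lemma norm1_ge0 (c : 'I_N -> R) : 0 <= norm1 c.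
Proof. exact: sumr_ge0. Qed.

Lemma norm_sum_le_norm1 (P : pred 'I_N) (c d : 'I_N -> R) (rho : R) : 0 <= rho ->
  (forall i, P i -> `|d i| <= rho) -> `|\sum_(i | P i) c i * d i| <= rho * norm1 c.
Proof.
move=> r0 hd; apply: le_trans (ler_norm_sum _ _ _) _.
rewrite /norm1 mulr_sumr big_mkcond /=; apply: ler_sum => i _.
case: ifP => Pi; last by rewrite mulr_ge0.
by rewrite normrM mulrC ler_wpM2r // hd.
Qed.
End L1Norm.

Section Objective.
Variables (R : realType) (D N : nat) (x : 'I_N -> 'rV[R]_D) (lam : R) (u : 'rV[R]_D).
Hypotheses (x1 : forall i, sqnorm2 (x i) = 1) (u1 : sqnorm2 u = 1) (lam_gt1 : 1 < lam).
Implicit Types (X : set 'rV[R]_D) (c : 'I_N -> R).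

Local Notation L := (1 - 1 / (2 * lam)).

Let lam_gt0 : 0 < lam := lt_trans ltr01 lam_gt1.

Lemma fobj_ge_margin X c rho : 0 <= rho <= 1 ->
    (forall i, x i \in X -> `|dot u (x i)| <= rho) ->
  L + margin lam rho <= fobj lam x u X c.
Proof.
move=> /andP[r0 r1] hrho; rewrite /fobj; set w := (X in u - X).
apply: (margin_lower_bound (s := dot u w)) => //; first by rewrite r0.
- exact: norm1_ge0.
- by rewrite /w dot_sumr; exact: norm_sum_le_norm1.
- by have := sqr_dot_le (u - w) u1; rewrite dotBr -sqnorm2_dot u1.
Qed.

Lemma fobj_ge X c : L <= fobj lam x u X c.
Proof.
have := @fobj_ge_margin X c 1; rewrite margin1 // addr0 ler01 lexx; apply=> // i _.
exact: norm_dot_le1.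
Qed.

Lemma fobj0 X : fobj lam x u X (fun _ => 0) = lam / 2.
Proof.
rewrite /fobj /norm1 big1 ?normr0 // add0r big1 ?subr0 ?u1 ?mulr1 //.
by move=> i _; rewrite scale0r.
Qed.

Lemma fobj_atom X k (a : R) : x k \in X ->
  fobj lam x u X (fun i => if i == k then a else 0)
  = `|a| + lam / 2 * sqnorm2 (u - a *: x k).
Proof.
move=> Xk; rewrite /fobj /norm1 (bigD1 k) //= eqxx big1 ?addr0; last first.
  by move=> i /negPf ->; rewrite normr0.
rewrite (bigD1 k) //= eqxx big1 ?addr0 //.
by move=> i /andP[_ /negPf ->]; rewrite scale0r.
Qed.

Lemma f_lam_ge X m : (forall c, m <= fobj lam x u X c) -> m <= f_lam lam x u X.
Proof.
move=> hm; rewrite /f_lam; case: asboolP => _; first by rewrite -(fobj0 X).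
apply: lb_le_inf; last by move=> _ [c _ <-].
by exists (fobj lam x u X (fun _ => 0)), (fun _ => 0).
Qed.

Lemma f_lam_le X c : X <> set0 -> f_lam lam x u X <= fobj lam x u X c.
Proof.
move=> X_neq0; rewrite /f_lam asboolF //; apply: ge_inf; last by exists c.
by exists L => _ [c' _ <-]; exact: fobj_ge.
Qed.

Lemma f_lam_le_half X : f_lam lam x u X <= lam / 2.
Proof.
have [->|X_neq0] := pselect (X = set0); first by rewrite /f_lam asboolT.
by rewrite -(fobj0 X) f_lam_le.
Qed.

Lemma f_lam_gt X : ~ (u \in X \/ - u \in X) -> L < f_lam lam x u X.
Proof.
move=> uX; set rho := \big[Num.max/0]_(i | x i \in X) `|dot u (x i)|.
have rho_ge i : x i \in X -> `|dot u (x i)| <= rho by move=> Xi; exact: le_bigmax_cond.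
have rho0 : 0 <= rho by apply/bigmax_geP; left.
have rho1 : rho < 1.
  apply: bigmax_lt => // i Xi; rewrite lt_neqAle norm_dot_le1 // andbT.
  by apply/eqP => /(unit_norm_dot_eq1 u1 (x1 i)) [] xi; apply: uX; rewrite -xi; [left | right].
apply: (@lt_le_trans _ _ (L + margin lam rho)); first by rewrite ltrDl margin_gt0.
by apply: f_lam_ge => c; apply: fobj_ge_margin; rewrite ?rho0 ?ltW.
Qed.

Lemma f_lam_eq X : X `<=` range x -> u \in X \/ - u \in X -> f_lam lam x u X = L.
Proof.
move=> Xx uX.
have [k Xk uk] : exists2 k, x k \in X & u = x k \/ u = - x k.
  case: uX => uX; have [k _ xk] := Xx _ (set_mem uX); exists k; rewrite xk ?opprK //.
  - by left.
  - by right.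
have X_neq0 : X <> set0 by move=> X_eq0; move: Xk; rewrite X_eq0 in_setE.
apply/eqP; rewrite eq_le (f_lam_ge (fobj_ge X)) andbT.
suff [c <-] : exists c, fobj lam x u X c = L by exact: f_lam_le.
set a := 1 - lam^-1.
have a0 : 0 <= a by rewrite subr_ge0 ltW // invf_lt1.
have atom : `|a| + lam / 2 * sqnorm2 (u - a *: u) = L.
  rewrite ger0_norm // -{1}(scale1r u) -scalerBl sqnorm2Z u1 mulr1.
  by rewrite completed_square ?subrr ?expr0n ?mulr0 ?addr0 // gt_eqF.
case: uk => uk.
- by exists (fun i => if i == k then a else 0); rewrite fobj_atom // -uk.
- exists (fun i => if i == k then - a else 0).
  by rewrite fobj_atom // normrN scaleNr -scalerN -uk.
Qed.
End Objective.

Theorem lemma2 (R : realType) (D N : nat) (x : 'I_N -> 'rV[R]_D) (lam : R)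
  (hunit : forall j, sqnorm2 (x j) = 1) (hlam : 1 < lam) :
  forall j : 'I_N,
    (forall X0 : set 'rV[R]_D, X0 `<=` range x ->
       1 - 1 / (2 * lam) <= f_lam lam x (x j) X0 <= lam / 2)
    /\ f_lam lam x (x j) set0 = lam / 2
    /\ (forall X0 : set 'rV[R]_D, X0 `<=` range x ->
       (f_lam lam x (x j) X0 = 1 - 1 / (2 * lam) <->
        (x j \in X0 \/ - x j \in X0))).
Proof.
move=> j; have xj1 := hunit j.
split; [|split].
- move=> X0 _; rewrite f_lam_le_half // andbT.
  by apply: f_lam_ge => // c; exact: fobj_ge.
- by rewrite /f_lam asboolT.
- move=> X0 X0x; split; last exact: f_lam_eq.
  move=> fL; apply: contrapT => /(f_lam_gt hunit xj1 hlam).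
  by rewrite fL ltxx.
Qed.
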